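(* Let $\mathfrak{C}=(U,M,I,N,J)$ be a formal decision context. Then the set of necessary I-decision rules of $\mathfrak{C}$ is $$\overline{\mathfrak{R}}_{I}(\mathfrak{C})=\{(O^{\square_M\lozenge_M},O^{\square_M})\rightarrow(\cap[O]_{R_2},(\cap[O]_{R_2})^{\uparrow_N})\mid O\in\mathrm{Ext}L(\mathfrak{C}_N),\ O\ne U,\ O^{\square_M\lozenge_M}\neq\emptyset\}.$$
   Context: Formal context $(U,M,I)$: $U$ and $M$ are finite nonempty sets and $I\subseteq U\times M$. For $O\subseteq U$ and $C\subseteq M$ define: - $O^{\uparrow}=\{a\in M\mid \forall x\in O\,((x,a)\in I)\}$ and $C^{\downarrow}=\{x\in U\mid \forall a\in C\,((x,a)\in I)\}$; - $O^{\square}=\{a\in M\mid \forall x\in U\,((x,a)\in I\Rightarrow x\in O)\}$ and $C^{\lozenge}=\{x\in U\mid \exists a\in C\,((x,a)\in I)\}$. A formal concept is a pair $(O,C)$ with $O^\uparrow=C$ and $C^\downarrow=O$ (set $L$). An object-oriented concept is a pair $(O,C)$ with $O^\square=C$ and $C^\lozenge=O$ (set $L_O$). $\mathrm{Ext}$ denotes the set of extents. Standing assumption: contexts are canonical, i.e. for all $x\in U$ and $a\in M$ we have $\{x\}^\uparrow\notin\{\emptyset,M\}$ and $\{a\}^\downarrow\notin\{\emptyset,U\}$. A formal decision context $\mathfrak{C}=(U,M,I,N,J)$ has conditional context $\mathfrak{C}_M=(U,M,I)$ and decision context $\mathfrak{C}_N=(U,N,J)$, with $M\cap N=\emptyset$.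 Operators carry the subscript $M$ or $N$ according to the context in which they are computed. An I-decision rule is $(O,C)\rightarrow(Y,D)$ with $(O,C)\in L_O(\mathfrak{C}_M)$, $(Y,D)\in L(\mathfrak{C}_N)$, $O\subseteq Y$, $O\ne\emptyset$ and $Y\ne U$; the set of these is $\mathfrak{R}_I(\mathfrak{C})$. Implication: $(O_1,C_1)\rightarrow(Y_1,D_1)\Rightarrow(O_2,C_2)\rightarrow(Y_2,D_2)$ iff $O_2\subseteq O_1\subseteq Y_1\subseteq Y_2$. A rule $r$ is necessary if there is no $r_1\in\mathfrak{R}_I(\mathfrak{C})$ with $r_1\ne r$ and $r_1\Rightarrow r$. $R_2$ is the equivalence relation on $\mathrm{Ext}L(\mathfrak{C}_N)$ given by $(O,Y)\in R_2$ iff $O^{\square_M}=Y^{\square_M}$. $[O]_{R_2}$ is the class of $O$, and $\cap[O]_{R_2}$ is the intersection of its members. *)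

From mathcomp Require Import all_boot all_order.
Set Implicit Arguments. Unset Strict Implicit. Unset Printing Implicit Defensive.

Section Ops.
Variables (U M : finType) (I : U -> M -> bool).

Definition up (O : {set U}) : {set M} := [set a | [forall x in O, I x a]].
Definition down (C : {set M}) : {set U} := [set x | [forall a in C, I x a]].
Definition box (O : {set U}) : {set M} := [set a | [forall x, I x a ==> (x \in O)]].
Definition dia (C : {set M}) : {set U} := [set x | [exists a in C, I x a]].

Definition is_concept (O : {set U}) (C : {set M}) : Prop := up O = C /\ down C = O.
Definition is_oconcept (O : {set U}) (C : {set M}) : Prop := box O = C /\ dia C = O.

Definition is_extent (O : {set U}) : Prop := exists C, is_concept O C.

Definition canonical : Prop :=
  (forall x : U, up [set x] != set0 /\ up [set x] != setT) /\
  (forall a : M, down [set a] != set0 /\ down [set a] != setT).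
End Ops.

Section Decision.
Variables (U M N : finType) (I : U -> M -> bool) (J : U -> N -> bool).

(* A rule (O,C) -> (Y,D) is represented by the quadruple (O, C, Y, D). *)
Definition rule := ({set U} * {set M} * {set U} * {set N})%type.

Definition is_Irule (r : rule) : Prop :=
  let: (Ob, C, Y, D) := r return Prop in
  is_oconcept I Ob C /\ is_concept J Y D /\ Ob \subset Y /\ Ob != set0 /\ Y != setT.

Definition rule_implies (r1 r2 : rule) : Prop :=
  let: (O1, C1, Y1, D1) := r1 return Prop in
  let: (O2, C2, Y2, D2) := r2 return Prop in
  O2 \subset O1 /\ O1 \subset Y1 /\ Y1 \subset Y2.

Definition necessary (r : rule) : Prop :=
  is_Irule r /\ ~ exists r1, [/\ is_Irule r1, r1 <> r & rule_implies r1 r].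

Definition R2class (O : {set U}) : {set {set U}} :=
  [set Y : {set U} | down J (up J Y) == Y & box I Y == box I O].

Definition capR2 (O : {set U}) : {set U} := \bigcap_(Y in R2class O) Y.
End Decision.

From mathcomp Require Import all_boot all_order.

(* The operators [dia] and [box] form a Galois connection ([dia C \subset X]
   iff [C \subset box X]), so [box] preserves intersections; extents are also
   closed under intersection.  Hence, for an extent [O], the intersection of
   its [R2]-class is again in the class: it is the least extent with the same
   [box] as [O].  An I-rule [(O', C) -> (Y, D)] is implied by the rule built
   from [Y] in the displayed form, and the rules of that form admit no other
   rule implying them; so they are exactly the necessary ones. *)

Section GaloisConnections.
Context {U M : finType} (I : U -> M -> bool).

Lemma dia_subset_boxE (C : {set M}) (X : {set U}) :
  (dia I C \subset X) = (C \subset box I X).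
Proof.
apply/subsetP/subsetP => [diaCX a aC | Cbox x].
- rewrite inE; apply/forallP => x; apply/implyP => Ixa.
  by apply: diaCX; rewrite inE; apply/existsP; exists a; rewrite aC.
- rewrite inE => /existsP [a /andP [aC Ixa]].
  by have := Cbox a aC; rewrite inE => /forallP /(_ x); rewrite Ixa.
Qed.

Lemma dia_box_subset (X : {set U}) : dia I (box I X) \subset X.
Proof. by rewrite dia_subset_boxE. Qed.

Lemma subset_box_dia (C : {set M}) : C \subset box I (dia I C).
Proof. by rewrite -dia_subset_boxE. Qed.

Lemma box_mono (A B : {set U}) : A \subset B -> box I A \subset box I B.
Proof. by move=> AB; rewrite -dia_subset_boxE (subset_trans (dia_box_subset A)). Qed.

Lemma dia_mono (C D : {set M}) : C \subset D -> dia I C \subset dia I D.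
Proof. by move=> CD; rewrite dia_subset_boxE (subset_trans CD) ?subset_box_dia. Qed.

Lemma box_dia_box (X : {set U}) : box I (dia I (box I X)) = box I X.
Proof.
by apply/eqP; rewrite eqEsubset box_mono ?dia_box_subset ?subset_box_dia.
Qed.

Lemma boxT : box I setT = setT.
Proof. by apply/setP => a; rewrite !inE; apply/forallP => x; rewrite inE implybT. Qed.

Lemma boxI (A B : {set U}) : box I (A :&: B) = box I A :&: box I B.
Proof.
apply/eqP; rewrite eqEsubset subsetI !box_mono ?subsetIl ?subsetIr //=.
by rewrite -dia_subset_boxE subsetI !dia_subset_boxE subsetIl subsetIr.
Qed.

Lemma up_anti (A B : {set U}) : A \subset B -> up I B \subset up I A.
Proof.
move=> /subsetP AB; apply/subsetP => a; rewrite !inE => /forall_inP IBa.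
by apply/forall_inP => x /AB /IBa.
Qed.

Lemma down_anti (C D : {set M}) : C \subset D -> down I D \subset down I C.
Proof.
move=> /subsetP CD; apply/subsetP => x; rewrite !inE => /forall_inP IxD.
by apply/forall_inP => a /CD /IxD.
Qed.

Lemma subset_down_up (A : {set U}) : A \subset down I (up I A).
Proof.
apply/subsetP => x xA; rewrite inE; apply/forall_inP => a.
by rewrite inE => /forall_inP; apply.
Qed.

Lemma is_extentP (O : {set U}) : is_extent I O <-> down I (up I O) = O.
Proof. by split => [[C [-> ->]] | dO]; last by exists (up I O). Qed.

Lemma is_extentT : is_extent I setT.
Proof. by apply/is_extentP/eqP; rewrite eqEsubset subsetT subset_down_up. Qed.

Lemma is_extentI (A B : {set U}) :
  is_extent I A -> is_extent I B -> is_extent I (A :&: B).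
Proof.
move=> /is_extentP dA /is_extentP dB; apply/is_extentP/eqP.
rewrite eqEsubset subset_down_up andbT subsetI.
by rewrite -{2}dA -{3}dB !down_anti ?up_anti ?subsetIl ?subsetIr.
Qed.

End GaloisConnections.

Section NecessaryRules.
Context {U M N : finType} (I : U -> M -> bool) (J : U -> N -> bool).

Lemma R2classP (O Y : {set U}) :
  Y \in R2class I J O <-> is_extent J Y /\ box I Y = box I O.
Proof.
rewrite inE; split => [/andP [/eqP dY /eqP bY] | [/is_extentP -> ->]].
  by split; first exact/is_extentP.
by rewrite !eqxx.
Qed.

Lemma capR2_min (O Y : {set U}) : Y \in R2class I J O -> capR2 I J O \subset Y.
Proof. exact: bigcap_inf. Qed.

Lemma capR2_in_class {O : {set U}} :
  is_extent J O -> capR2 I J O \in R2class I J O.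
Proof.
move=> eO; have OO : O \in R2class I J O by apply/R2classP.
have [eC sOC] : is_extent J (capR2 I J O) /\ box I O \subset box I (capR2 I J O).
  apply: (big_ind (fun X => is_extent J X /\ box I O \subset box I X)).
  - by rewrite boxT subsetT; split; first exact: is_extentT.
  - move=> X Y [eX sX] [eY sY].
    by rewrite boxI subsetI sX sY; split; first exact: is_extentI.
  - by move=> Y /R2classP [eY ->].
apply/R2classP; split => //; apply/eqP.
by rewrite eqEsubset sOC box_mono ?capR2_min.
Qed.

Lemma capR2_subset {O : {set U}} : is_extent J O -> capR2 I J O \subset O.
Proof. by move=> eO; apply: capR2_min; apply/R2classP. Qed.

Definition rule_of_extent (O : {set U}) : rule U M N :=
  (dia I (box I O), box I O, capR2 I J O, up J (capR2 I J O)).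

Lemma rule_of_extent_Irule (O : {set U}) :
  is_extent J O -> O != setT -> dia I (box I O) != set0 ->
  is_Irule I J (rule_of_extent O).
Proof.
move=> eO OT diaO0; have /R2classP [/is_extentP eC bC] := capR2_in_class eO.
split; first by split; rewrite ?box_dia_box.
split; first by split.
split; first by rewrite dia_subset_boxE bC.
split=> //; apply: contraNneq OT => CT.
by rewrite -subTset -CT capR2_subset.
Qed.

Lemma rule_of_extent_implies {O : {set U}} {C : {set M}} {Y : {set U}} {D : {set N}} :
  is_Irule I J (O, C, Y, D) -> rule_implies (rule_of_extent Y) (O, C, Y, D).
Proof.
move=> [[bO dC] [[uY dD] [OY _]]].
have eY : is_extent J Y by exists D.
have /R2classP [_ bC] := capR2_in_class eY.
split; first by rewrite -dC dia_mono // -bO box_mono.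
by split; rewrite ?dia_subset_boxE ?bC ?capR2_subset.
Qed.

Lemma rule_of_extent_minimal (O : {set U}) (r : rule U M N) :
  is_extent J O -> is_Irule I J r -> rule_implies r (rule_of_extent O) ->
  r = rule_of_extent O.
Proof.
case: r => [[[O1 C1] Y1] D1] eO [[bO1 dC1] [[uY1 dD1] _]] [diaO1 [O1Y1 Y1C]].
have /R2classP [_ bC] := capR2_in_class eO.
have bY1 : box I Y1 = box I O.
  apply/eqP; rewrite eqEsubset -{1}bC box_mono //= -{1}box_dia_box.
  by rewrite box_mono // (subset_trans diaO1).
have eY1 : Y1 = capR2 I J O.
  apply/eqP; rewrite eqEsubset Y1C capR2_min //.
  by apply/R2classP; split; first by exists D1.
have eO1 : O1 = dia I (box I O).
  apply/eqP; rewrite eqEsubset diaO1 andbT -dC1 dia_mono // -bO1 -bY1.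
  exact: box_mono.
by rewrite /rule_of_extent -bO1 -uY1 eO1 eY1 box_dia_box.
Qed.

End NecessaryRules.

Theorem theorem3p7 (U M N : finType) (I : U -> M -> bool) (J : U -> N -> bool) :
  canonical I -> canonical J ->
  forall r : rule U M N,
    necessary I J r <->
    exists O : {set U},
      [/\ is_extent J O, O != setT, dia I (box I O) != set0 &
          r = (dia I (box I O), box I O, capR2 I J O, up J (capR2 I J O))].
Proof.
move=> _ _ r; split.
- case: r => [[[O C] Y] D] [Ir not_implied].
  move: (Ir) => [_ [cY [_ [O0 YT]]]].
  have eY : is_extent J Y by exists D.
  have [OdiaY _] := rule_of_extent_implies I J Ir.
  have diaY0 : dia I (box I Y) != set0.
    by apply: contraNneq O0 => diaY; rewrite -subset0 -diaY.
  exists Y; split=> //; case: (eqVneq (rule_of_extent I J Y) (O, C, Y, D)) => // ne.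
  case: not_implied; exists (rule_of_extent I J Y); split.
  + exact: rule_of_extent_Irule.
  + exact/eqP.
  + exact: rule_of_extent_implies.
- move=> [O [eO OT diaO0 ->]]; split; first exact: rule_of_extent_Irule.
  by case=> r1 [Ir1 ne imp]; apply: ne; apply: rule_of_extent_minimal.
Qed.
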